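(* Let $n\ge4$, $x_1,\dots,x_{n-1}>0$, $\gamma,\delta>0$ with $\gamma\ne1\ne\delta$, $x_0=1$, and let $\mathbf{P}$ be the $n\times n$ matrix with entries $p_{ij}=x_{j-1}/x_{i-1}$ except $p_{12}=\delta x_1$, $p_{21}=1/(\delta x_1)$, $p_{13}=\gamma x_2$, $p_{31}=1/(\gamma x_2)$. Let $\mathbf{w}^{EM}$ be the principal right eigenvector of $\mathbf{P}$. If $\delta<1$ and $\delta\le\gamma$, then $w_1^{EM}/w_2^{EM}>\delta x_1$.
   Context: The principal right eigenvector is the positive (Perron) eigenvector belonging to the largest eigenvalue. *)

From HB Require Import structures.
From mathcomp Require Import all_boot all_order all_algebra.
From mathcomp Require Import all_reals.
Set Implicit Arguments. Unset Strict Implicit. Unset Printing Implicit Defensive.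
Import Order.TTheory GRing.Theory Num.Theory.
Local Open Scope ring_scope.

(* Entry p_{ij} of the perturbed consistent PC matrix, with 0-based indices:
   paper index i corresponds to nat index i-1, and x k is x_k (x 0 = 1). *)
Definition pEM (R : fieldType) (x : nat -> R) (gamma delta : R) (i j : nat) : R :=
  if (i == 0%N) && (j == 1%N) then delta * x 1%N
  else if (i == 1%N) && (j == 0%N) then (delta * x 1%N)^-1
  else if (i == 0%N) && (j == 2%N) then gamma * x 2%N
  else if (i == 2%N) && (j == 0%N) then (gamma * x 2%N)^-1
  else x j / x i.

Definition PEM (R : fieldType) (n : nat) (x : nat -> R) (gamma delta : R)
  : 'M[R]_n := \matrix_(i < n, j < n) pEM x gamma delta i j.

Definition principal_right_eigvec (R : realFieldType) (n : nat)
  (P : 'M[R]_n) (w : 'cV[R]_n) : Prop :=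
  exists lam : R,
    [/\ P *m w = lam *: w,
        (forall i, 0 < w i 0) &
        (forall mu : R, eigenvalue P mu -> mu <= lam)].

From HB Require Import structures.
From mathcomp Require Import all_boot all_order all_algebra.
From mathcomp Require Import all_reals.
From mathcomp Require Import ring.
Import Order.TTheory GRing.Theory Num.Theory.
Local Open Scope ring_scope.

(** Scaling row 2 by [delta x_1] and subtracting row 1 gives
  [lam (w_1 - delta x_1 w_2) = (gamma - delta) x_2 w_3 + (1 - delta) r]
  with [r = sum_(j >= 4) x_j w_j > 0] (here [n >= 4] is used), and
  [lam > 0] by row 1, so [w_1 > delta x_1 w_2]. *)

Lemma mulmx_eigen_row_nat (R : pzRingType) (N : nat) (f : nat -> nat -> R)
    (w : 'cV[R]_N.+1) (lam : R) (i : nat) :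
  (\matrix_(i < N.+1, j < N.+1) f i j) *m w = lam *: w -> (i < N.+1)%N ->
  \sum_(0 <= j < N.+1) f i j * w (inord j) 0 = lam * w (inord i) 0.
Proof.
move=> /(congr1 (fun v : 'cV_N.+1 => v (inord i) 0)) /=; rewrite !mxE big_mkord => <- lt_i.
by apply: eq_bigr => j _; rewrite mxE inordK // inord_val.
Qed.

Section PerturbedRows.

Variables (R : realFieldType) (x : nat -> R) (gamma delta : R).

Lemma pEM_consistent (i j : nat) : (3 <= j)%N -> pEM x gamma delta i j = x j / x i.
Proof.
by case: j => [|[|[|j]]] // _; rewrite /pEM !andbF.
Qed.

Lemma sum_pEM_consistent (W : nat -> R) (i N : nat) :
  \sum_(3 <= j < N) pEM x gamma delta i j * W j = (\sum_(3 <= j < N) x j * W j) / x i.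
Proof.
rewrite mulr_suml !big_nat; apply: eq_bigr => j /andP[j_ge3 _].
by rewrite pEM_consistent // mulrAC.
Qed.

Lemma eigval_mul_ratio_gap (lam w1 w2 w3 r : R) :
  x 1%N != 0 -> delta != 0 ->
  w1 + delta * x 1%N * w2 + gamma * x 2%N * w3 + r = lam * w1 ->
  (delta * x 1%N)^-1 * w1 + w2 + x 2%N / x 1%N * w3 + r / x 1%N = lam * w2 ->
  lam * (w1 - delta * x 1%N * w2) = (gamma - delta) * x 2%N * w3 + (1 - delta) * r.
Proof.
move=> x1_neq0 delta_neq0 row1 row2.
have row2' : w1 + delta * x 1%N * w2 + delta * x 2%N * w3 + delta * r
             = lam * (delta * x 1%N * w2).
  by rewrite mulrCA -row2; field; rewrite x1_neq0 delta_neq0.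
rewrite mulrBr -row2' -row1; ring.
Qed.

Lemma ratio_gt_of_eigen_rows (lam w1 w2 w3 r : R) :
  0 < x 1%N -> 0 < x 2%N -> 0 < delta -> delta < 1 -> delta <= gamma ->
  0 < w1 -> 0 < w2 -> 0 < w3 -> 0 < r ->
  w1 + delta * x 1%N * w2 + gamma * x 2%N * w3 + r = lam * w1 ->
  (delta * x 1%N)^-1 * w1 + w2 + x 2%N / x 1%N * w3 + r / x 1%N = lam * w2 ->
  delta * x 1%N * w2 < w1.
Proof.
move=> x1_gt0 x2_gt0 delta_gt0 delta_lt1 delta_le_gamma w1_gt0 w2_gt0 w3_gt0 r_gt0.
move=> row1 row2.
have gap := eigval_mul_ratio_gap _ _ _ _ _ (lt0r_neq0 x1_gt0) (lt0r_neq0 delta_gt0) row1 row2.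
have lam_gt0 : 0 < lam.
  rewrite -(pmulr_lgt0 _ w1_gt0) -row1.
  have : 0 < gamma by apply: lt_le_trans delta_le_gamma.
  by move=> gamma_gt0; rewrite !addr_gt0 // !mulr_gt0.
rewrite -subr_gt0 -(pmulr_rgt0 _ lam_gt0) gap ltr_wpDl //.
  by rewrite !mulr_ge0 ?subr_ge0 // ltW.
by rewrite mulr_gt0 // subr_gt0.
Qed.

End PerturbedRows.

Theorem mainTheorem6 (R : realType) (n : nat) (x : nat -> R) (gamma delta : R)
  (w : 'cV[R]_n) :
  (4 <= n)%N ->
  x 0%N = 1 ->
  (forall k : nat, (1 <= k < n)%N -> 0 < x k) ->
  0 < gamma -> 0 < delta -> gamma != 1 -> delta != 1 ->
  principal_right_eigvec (PEM n x gamma delta) w ->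
  delta < 1 -> delta <= gamma ->
  forall i1 i2 : 'I_n, nat_of_ord i1 = 0%N -> nat_of_ord i2 = 1%N ->
    delta * x 1%N < w i1 0 / w i2 0.
Proof.
move=> n_ge4 x0 x_pos gamma_gt0 delta_gt0 _ _ [lam [Pw w_pos _]] delta_lt1 delta_le_gamma.
move=> i1 i2 i1_0 i2_1.
have [m def_n] : exists m, n = m.+4 by exists (n - 4)%N; rewrite -addn4 subnK.
subst n; pose W j := w (inord j) 0.
have W_pos j : 0 < W j by apply: w_pos.
have w_i1 : w i1 0 = W 0%N by rewrite /W; congr (w _ 0); apply: val_inj; rewrite /= inordK.
have w_i2 : w i2 0 = W 1%N by rewrite /W; congr (w _ 0); apply: val_inj; rewrite /= inordK.
have row i : (i < m.+4)%N ->
    \sum_(0 <= j < m.+4) pEM x gamma delta i j * W j = lam * W i.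
  exact: mulmx_eigen_row_nat Pw.
pose r := \sum_(3 <= j < m.+4) x j * W j.
have r_gt0 : 0 < r.
  rewrite /r big_ltn // ltr_pwDl ?mulr_gt0 ?x_pos // big_nat sumr_ge0 //.
  by move=> j /andP[j_ge3 j_lt]; rewrite mulr_ge0 ?ltW ?x_pos // j_lt (leq_trans _ j_ge3).
have row1 : W 0%N + delta * x 1%N * W 1%N + gamma * x 2%N * W 2%N + r = lam * W 0%N.
  by rewrite -[RHS](row 0%N isT) 3?big_ltn // sum_pEM_consistent /pEM /= x0 !divr1 mul1r !addrA.
have row2 : (delta * x 1%N)^-1 * W 0%N + W 1%N + x 2%N / x 1%N * W 2%N + r / x 1%N
            = lam * W 1%N.
  by rewrite -[RHS](row 1%N isT) 3?big_ltn // sum_pEM_consistent /pEM /= divff ?mul1r ?addrA // lt0r_neq0 ?x_pos.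
rewrite w_i1 w_i2 ltr_pdivlMr //; move: row1 row2.
by apply: ratio_gt_of_eigen_rows; rewrite ?x_pos.
Qed.
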